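(* Let $\bm{\gamma}$ be a model such that $\bm{X}_{\bm{\gamma}}$ has full column rank, and let $\tilde{\bm{\gamma}}\subseteq\bm{\gamma}^*$ with $\tilde{\bm{\gamma}}\not\subseteq\bm{\gamma}$. Then $$\mu(\bm{\gamma}\cup\tilde{\bm{\gamma}},\bm{\gamma})\ge n\,\phi^{-1}\rho(\bm{X})\sum_{b=1}^B|\tilde{\bm{\gamma}}_b\setminus\bm{\gamma}_b|\min_{i\in\tilde{\bm{\gamma}}_b\setminus\bm{\gamma}_b}(\theta^*_i)^2,$$ where terms with $\tilde{\bm{\gamma}}_b\setminus\bm{\gamma}_b=\emptyset$ are zero.
   Context: $\bm{X}\in\mathbb{R}^{n\times p}$, $\bm{\theta}^*\in\mathbb{R}^p$, $\phi>0$, true support $\bm{\gamma}^*=\{j:\theta^*_j\ne0\}$; each index $j$ has a block label $z_j\in\{1,\ldots,B\}$ and for an index set $\bm{\gamma}$, $\bm{\gamma}_b=\{j\in\bm{\gamma}:z_j=b\}$. $\bm{X}_{\bm{\gamma}}$ denotes the columns indexed by $\bm{\gamma}$, $\bm{\theta}^*_{\bm{\gamma}}$ the corresponding entries, $P_{\bm{\gamma}}=\bm{X}_{\bm{\gamma}}(\bm{X}_{\bm{\gamma}}^T\bm{X}_{\bm{\gamma}})^{-1}\bm{X}_{\bm{\gamma}}^T$. For models $\bm{\gamma},\tilde{\bm{\gamma}}$: $\mu(\bm{\gamma},\tilde{\bm{\gamma}})=\phi^{-1}\|(I_n-P_{\tilde{\bm{\gamma}}})\bm{X}_{\bm{\gamma}\setminus\tilde{\bm{\gamma}}}\bm{\theta}^*_{\bm{\gamma}\setminus\tilde{\bm{\gamma}}}\|^2$.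 $\rho(\bm{X})=\min_{\bm{\gamma}:\bm{\gamma}\not\supseteq\bm{\gamma}^*}\lambda_{\min}\big(\tfrac1n\bm{X}_{\bm{\gamma}^*\setminus\bm{\gamma}}^T(I-P_{\bm{\gamma}})\bm{X}_{\bm{\gamma}^*\setminus\bm{\gamma}}\big)$, minimum over the considered models (those with $\bm{X}_{\bm{\gamma}}$ of full column rank), which include $\bm{\gamma}$. *)

From HB Require Import structures.
From mathcomp Require Import all_boot all_order all_algebra.
From mathcomp Require Import boolp classical_sets reals.
Set Implicit Arguments. Unset Strict Implicit. Unset Printing Implicit Defensive.
Import Order.TTheory GRing.Theory Num.Theory.
Local Open Scope ring_scope.
Local Open Scope classical_set_scope.

Section Defs.
Variable R : realType.
Variables (n p : nat).

(* X_gamma : the columns of X indexed by gamma (in increasing index order). *)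
Definition Xsub (X : 'M[R]_(n, p)) (g : {set 'I_p}) : 'M[R]_(n, #|g|) :=
  colsub (@enum_val _ (mem g)) X.

Definition thsub (th : 'cV[R]_p) (g : {set 'I_p}) : 'cV[R]_(#|g|) :=
  \col_(i < #|g|) th (enum_val i) 0.

Definition full_col_rank (X : 'M[R]_(n, p)) (g : {set 'I_p}) : bool :=
  \rank (Xsub X g) == #|g|.

Definition proj (X : 'M[R]_(n, p)) (g : {set 'I_p}) : 'M[R]_n :=
  Xsub X g *m invmx ((Xsub X g)^T *m Xsub X g) *m (Xsub X g)^T.

Definition sqnorm m (v : 'cV[R]_m) : R := \sum_(i < m) v i 0 ^+ 2.

Definition true_support (th : 'cV[R]_p) : {set 'I_p} := [set j | th j 0 != 0].

Definition block B (z : 'I_p -> 'I_B) (g : {set 'I_p}) (b : 'I_B) : {set 'I_p} :=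
  [set j in g | z j == b].

Definition mu (X : 'M[R]_(n, p)) (th : 'cV[R]_p) (phi : R)
    (g gt : {set 'I_p}) : R :=
  phi^-1 * sqnorm ((1%:M - proj X gt) *m (Xsub X (g :\: gt) *m thsub th (g :\: gt))).

Definition lambda_min m (A : 'M[R]_m) : R := inf [set a : R | eigenvalue A a].

Definition rho_mx (X : 'M[R]_(n, p)) (gs g : {set 'I_p}) : 'M[R]_(#|gs :\: g|) :=
  (n%:R)^-1 *: ((Xsub X (gs :\: g))^T *m (1%:M - proj X g) *m Xsub X (gs :\: g)).

Definition rho (X : 'M[R]_(n, p)) (th : 'cV[R]_p) : R :=
  inf [set lambda_min (rho_mx X (true_support th) g) |
        g in [set g : {set 'I_p} | full_col_rank X g /\ ~~ (true_support th \subset g)]].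

Definition min_sq (th : 'cV[R]_p) (S : {set 'I_p}) : R :=
  if S == finset.set0 then 0 else inf [set th i 0 ^+ 2 | i in [set i | i \in S]].

End Defs.

From HB Require Import structures.
From mathcomp Require Import all_boot all_order all_algebra.
From mathcomp Require Import boolp classical_sets reals.
From mathcomp Require Import ring lra.
Import Order.TTheory GRing.Theory Num.Theory.
Local Open Scope ring_scope.
Set Implicit Arguments. Unset Strict Implicit. Unset Printing Implicit Defensive.

(* Let D = gt \ g and E = gamma* \ g, so that D is a subset of E.  Padding
   theta*_D with zeros on E \ D gives a vector u with X_D theta*_D = X_E u, so
   phi mu = |(I - P_g) X_E u|^2 = n u'Au for A = (1/n) X_E'(I - P_g) X_E.
   The Rayleigh bound u'Au >= lambda_min(A) |u|^2 >= rho |u|^2 concludes, as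
   |u|^2 = sum_{i in D} theta*_i^2 dominates sum_b |D_b| min_{D_b} theta*_i^2. *)

Section QuadraticForms.
Variables (R : realFieldType) (m : nat).
Implicit Types (M : 'M[R]_m) (v w : 'rV[R]_m).

Definition bform M w v : R := (w *m M *m v^T) 0 0.
Definition qform M v : R := bform M v v.
Definition sqnormr v : R := (v *m v^T) 0 0.
Definition psd M : Prop := forall v, 0 <= qform M v.
Definition mx_l1norm M : R := \sum_i \sum_j `|M i j|.

Lemma sqnormrE v : sqnormr v = \sum_i v 0 i ^+ 2.
Proof. by rewrite /sqnormr mxE; apply: eq_bigr => i _; rewrite mxE expr2. Qed.

Lemma sqnormr_ge0 v : 0 <= sqnormr v.
Proof. by rewrite sqnormrE; apply: sumr_ge0 => i _; apply: sqr_ge0. Qed.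

Lemma sqnormr_eq0 v : (sqnormr v == 0) = (v == 0).
Proof.
apply/idP/eqP => [|->]; last by rewrite sqnormrE big1 // => i _; rewrite mxE expr0n.
rewrite sqnormrE psumr_eq0 => [/allP v0|i _]; last exact: sqr_ge0.
by apply/rowP => i; rewrite mxE; apply/eqP; rewrite -sqrf_eq0 (implyP (v0 i _)).
Qed.

Lemma sqnormr0 : sqnormr 0 = 0.
Proof. by apply/eqP; rewrite sqnormr_eq0. Qed.

Lemma sqnormr_gt0 v : v != 0 -> 0 < sqnormr v.
Proof. by move=> v0; rewrite lt_def sqnormr_eq0 v0 sqnormr_ge0. Qed.

Lemma sqr_coord_le_sqnormr v i : v 0 i ^+ 2 <= sqnormr v.
Proof. by rewrite sqnormrE (bigD1 i) //= lerDl sumr_ge0 // => j _; apply: sqr_ge0. Qed.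

Lemma qformE M v : qform M v = \sum_i \sum_j v 0 i * M i j * v 0 j.
Proof.
rewrite /qform /bform mxE exchange_big /=; apply: eq_bigr => j _.
by rewrite [X in X * _]mxE [v^T _ _]mxE mulr_suml.
Qed.

Lemma qform_le_l1norm M v : qform M v <= mx_l1norm M * sqnormr v.
Proof.
rewrite qformE /mx_l1norm !mulr_suml; apply: ler_sum => i _.
rewrite mulr_suml; apply: ler_sum => j _.
have := sqr_coord_le_sqnormr v i; have := sqr_coord_le_sqnormr v j.
have := normr_ge0 (M i j); have := sqr_ge0 (`|v 0 i| - `|v 0 j|).
rewrite -[v 0 i ^+ 2]real_normK ?num_real // -[v 0 j ^+ 2]real_normK ?num_real //.
have := ler_norm (v 0 i * M i j * v 0 j); rewrite !normrM.
set a := `|v 0 i|; set b := `|v 0 j|; set c := `|M i j|; nra.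
Qed.

Lemma quadratic_ge0_discr (a b c : R) : 0 <= c ->
  (forall t, 0 <= a + 2 * t * b + t ^+ 2 * c) -> b ^+ 2 <= a * c.
Proof.
move=> c_ge0 nonneg; have [c0|c_neq0] := eqVneq c 0.
  have [b0|b_neq0] := eqVneq b 0; first by rewrite b0 c0 expr0n mulr0.
  have := nonneg (- (a + 1) / (2 * b)).
  have -> : 2 * (- (a + 1) / (2 * b)) * b = - (a + 1) by field.
  by rewrite c0 mulr0 addr0; lra.
have c_gt0 : 0 < c by rewrite lt_def c_neq0.
have := nonneg (- b / c).
have -> : a + 2 * (- b / c) * b + (- b / c) ^+ 2 * c = (a * c - b ^+ 2) / c by field.
by rewrite pmulr_lge0 ?invr_gt0 // subr_ge0.
Qed.

Lemma bformC M w v : M^T = M -> bform M v w = bform M w v.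
Proof.
have trE (A : 'M[R]_1) : A 0 0 = A^T 0 0 by rewrite mxE.
by move=> M_sym; rewrite /bform trE !trmx_mul trmxK M_sym mulmxA.
Qed.

Lemma qformDZ M w v t : M^T = M ->
  qform M (w + t *: v) = qform M w + 2 * t * bform M w v + t ^+ 2 * qform M v.
Proof.
move=> M_sym; rewrite /qform /bform linearD /= linearZ /=.
rewrite !mulmxDl !mulmxDr -!scalemxAl -!scalemxAr.
move: (bformC w v M_sym); rewrite /bform.
move: (w *m M *m w^T) (w *m M *m v^T) (v *m M *m w^T) (v *m M *m v^T).
by move=> A B C D; rewrite !mxE => ->; ring.
Qed.

Lemma psd_CauchySchwarz M w v : M^T = M -> psd M ->
  bform M w v ^+ 2 <= qform M w * qform M v.
Proof.
by move=> M_sym M_psd; apply: quadratic_ge0_discr => // t; rewrite -qformDZ.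
Qed.

Lemma mx_l1norm_ge0 M : 0 <= mx_l1norm M.
Proof. by apply: sumr_ge0 => i _; apply: sumr_ge0. Qed.

(* Cauchy-Schwarz for the form of [M] gives |vM|^2 <= K1 (vMv'), and
   [v = (vM) M^-1] gives |v|^2 <= K2 |vM|^2. *)
Lemma psd_unitmx_coercive M : M^T = M -> psd M -> M \in unitmx ->
  exists2 e, 0 < e & forall v, e * sqnormr v <= qform M v.
Proof.
move=> M_sym M_psd M_unit.
set K1 := mx_l1norm M; set K2 := mx_l1norm (invmx M *m (invmx M)^T).
have K1_ge0 : 0 <= K1 by apply: mx_l1norm_ge0.
have K2_ge0 : 0 <= K2 by apply: mx_l1norm_ge0.
exists (K2 * K1 + 1)^-1; first by rewrite invr_gt0; nra.
move=> v; set w := v *m M.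
have w_bform : sqnormr w = bform M w v.
  by rewrite /sqnormr /bform /w trmx_mul M_sym !mulmxA.
have w_le : sqnormr w <= K1 * qform M v.
  have : sqnormr w * sqnormr w <= sqnormr w * (K1 * qform M v).
    have := psd_CauchySchwarz w v M_sym M_psd; rewrite -w_bform.
    have := qform_le_l1norm M w; have := M_psd v; rewrite -/K1; nra.
  have [->|w_neq0] := eqVneq (sqnormr w) 0; first by have := M_psd v; nra.
  by rewrite ler_pM2l // lt_def w_neq0 sqnormr_ge0.
have v_le : sqnormr v <= K2 * sqnormr w.
  have -> : sqnormr v = qform (invmx M *m (invmx M)^T) w.
    rewrite /qform /bform /sqnormr /w !trmx_mul !mulmxA (mulmxK M_unit).
    by rewrite trmx_inv M_sym (mulmxKV M_unit).
  exact: qform_le_l1norm.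
rewrite ler_pdivrMl; last nra.
have := M_psd v; nra.
Qed.

Lemma qform_subr_scalar M c v : qform (M - c%:M) v = qform M v - c * sqnormr v.
Proof.
by rewrite /qform /bform /sqnormr mulmxBr mul_mx_scalar mulmxBl -scalemxAl !mxE.
Qed.

Lemma psd_eigenvalue_ge0 M a : psd M -> eigenvalue M a -> 0 <= a.
Proof.
move=> M_psd /eigenvalueP[v vM v_neq0]; have := M_psd v.
by rewrite /qform /bform vM -scalemxAl mxE -/(sqnormr v) pmulr_lge0 // sqnormr_gt0.
Qed.

End QuadraticForms.

Lemma qform_gram (R : realFieldType) m k (Z : 'M[R]_(k, m)) (Q : 'M[R]_k) v :
  Q^T = Q -> Q *m Q = Q -> qform (Z^T *m Q *m Z) v = sqnormr (v *m Z^T *m Q).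
Proof.
move=> Q_sym Q_idem; rewrite /qform /bform /sqnormr !trmx_mul Q_sym trmxK !mulmxA.
by rewrite -(mulmxA (v *m Z^T) Q Q) Q_idem.
Qed.

Lemma gram_unitmx (R : realFieldType) n k (Y : 'M[R]_(n, k)) :
  \rank Y = k -> Y^T *m Y \in unitmx.
Proof.
move=> Y_rank; have Yt_free : row_free Y^T by rewrite /row_free mxrank_tr Y_rank.
rewrite -row_free_unit; apply: inj_row_free => v v_gram.
have : sqnormr (v *m Y^T) == 0.
  by rewrite /sqnormr trmx_mul trmxK !mulmxA -(mulmxA v) v_gram mul0mx mxE.
by rewrite sqnormr_eq0 mulmx_free_eq0 // => /eqP.
Qed.

Lemma inf_ge0 (R : realType) (E : set R) : lbound E 0 -> 0 <= inf E.
Proof.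
move=> E_ge0; have [[x Ex]|E0] := pselect (exists x, E x).
  by apply: lb_le_inf => //; exists x.
by rewrite inf_out // => -[[x Ex] _]; apply: E0; exists x.
Qed.

Section Rayleigh.
Variables (R : realType) (m : nat).
Implicit Types (M : 'M[R]_m) (v : 'rV[R]_m).
Local Open Scope classical_set_scope.

Lemma lambda_min_ge0 M : psd M -> 0 <= lambda_min M.
Proof. by move=> M_psd; apply: inf_ge0 => a; apply: psd_eigenvalue_ge0. Qed.

(* The infimum [inf Q] of the Rayleigh quotient is itself an eigenvalue:
   otherwise [M - inf Q] would be invertible and positive semidefinite, hence
   coercive, and the quotient would stay above [inf Q + e] for some [e > 0]. *)
Lemma lambda_min_le_rayleigh M v : M^T = M -> psd M ->
  lambda_min M * sqnormr v <= qform M v.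
Proof.
move=> M_sym M_psd; have [->|v_neq0] := eqVneq v 0.
  by rewrite sqnormr0 mulr0; apply: M_psd.
pose Q := [set qform M x / sqnormr x | x in [set x | x != 0]].
have Q_ge0 : lbound Q 0.
  by move=> _ [x _ <-]; rewrite divr_ge0 ?sqnormr_ge0.
have inf_le x : x != 0 -> inf Q <= qform M x / sqnormr x.
  by move=> x_neq0; apply: ge_inf; [exists 0 | exists x].
have shift_psd : psd (M - (inf Q)%:M).
  move=> x; rewrite qform_subr_scalar subr_ge0.
  have [->|x_neq0] := eqVneq x 0; first by rewrite sqnormr0 mulr0.
  by rewrite -ler_pdivlMr ?sqnormr_gt0 ?inf_le.
have inf_eigen : eigenvalue M (inf Q).
  rewrite /eigenvalue /eigenspace kermx_eq0 row_free_unit; apply/negP => shift_unit.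
  have shift_sym : (M - (inf Q)%:M)^T = M - (inf Q)%:M.
    by rewrite linearB /= tr_scalar_mx M_sym.
  have [e e_gt0 coercive] := psd_unitmx_coercive shift_sym shift_psd shift_unit.
  suff : inf Q + e <= inf Q by lra.
  apply: lb_le_inf; first by exists (qform M v / sqnormr v), v.
  move=> _ [x x_neq0 <-]; rewrite ler_pdivlMr ?sqnormr_gt0 //.
  by have := coercive x; rewrite qform_subr_scalar; lra.
have : lambda_min M <= inf Q.
  by apply: ge_inf => //; exists 0 => a; apply: psd_eigenvalue_ge0.
move/(ler_wpM2r (sqnormr_ge0 v))/le_trans; apply.
by rewrite -ler_pdivlMr ?sqnormr_gt0 ?inf_le.
Qed.

End Rayleigh.

Section Regression.
Variables (R : realType) (n p : nat).
Implicit Types (X : 'M[R]_(n, p)) (th : 'cV[R]_p) (g gt S T : {set 'I_p}).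

Lemma residual_trmx X g : (1%:M - proj X g)^T = 1%:M - proj X g.
Proof.
rewrite linearB /= trmx1 /proj !trmx_mul trmxK trmx_inv trmx_mul trmxK.
by rewrite mulmxA.
Qed.

Lemma residual_idem X g : full_col_rank X g ->
  (1%:M - proj X g) *m (1%:M - proj X g) = 1%:M - proj X g.
Proof.
move=> /eqP/gram_unitmx gram_unit.
have proj_idem : proj X g *m proj X g = proj X g.
  by rewrite /proj !mulmxA -(mulmxA _ (Xsub X g)^T (Xsub X g)) mulmxKV //.
by rewrite mulmxBl mulmxBr !mul1mx mulmxBr mulmx1 proj_idem subrr subr0.
Qed.

Lemma rho_mx_trmx X S g : (rho_mx X S g)^T = rho_mx X S g.
Proof. by rewrite /rho_mx linearZ /= !trmx_mul trmxK residual_trmx mulmxA. Qed.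

Lemma qform_rho_mx X S g x : full_col_rank X g ->
  qform (rho_mx X S g) x
    = n%:R^-1 * sqnormr (x *m (Xsub X (S :\: g))^T *m (1%:M - proj X g)).
Proof.
move=> g_full; rewrite /rho_mx /qform /bform -scalemxAr -scalemxAl mxE.
by rewrite -[X in _ * X]/(qform _ x) qform_gram ?residual_trmx ?residual_idem.
Qed.

Lemma rho_mx_psd X S g : full_col_rank X g -> psd (rho_mx X S g).
Proof.
by move=> g_full x; rewrite qform_rho_mx // mulr_ge0 ?invr_ge0 ?sqnormr_ge0.
Qed.

(* Not an equation, because of the junk value [0^-1 = 0] when [n = 0]. *)
Lemma natr_mul_qform_rho_mx X S g x : full_col_rank X g ->
  n%:R * qform (rho_mx X S g) x
    <= sqnormr (x *m (Xsub X (S :\: g))^T *m (1%:M - proj X g)).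
Proof.
move=> g_full; rewrite qform_rho_mx // mulrA.
have [n0|n_neq0] := eqVneq n 0%N.
  by rewrite (_ : n%:R = 0) ?mul0r ?sqnormr_ge0 // n0.
by rewrite mulfV ?pnatr_eq0 // mul1r.
Qed.

Lemma rho_ge0 X th : 0 <= rho X th.
Proof.
apply: inf_ge0 => _ [g [g_full _] <-].
by apply: lambda_min_ge0; apply: rho_mx_psd.
Qed.

Lemma rho_le_lambda_min X th g : full_col_rank X g ->
  ~~ (true_support th \subset g) ->
  rho X th <= lambda_min (rho_mx X (true_support th) g).
Proof.
move=> g_full g_not_sup; apply: ge_inf; last by exists g.
exists 0 => _ [g' [g'_full _] <-].
by apply: lambda_min_ge0; apply: rho_mx_psd.
Qed.

Definition mask th S : 'cV[R]_p := \col_i (if i \in S then th i 0 else 0).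

Lemma Xsub_mul_thsub X th S : Xsub X S *m thsub th S = X *m mask th S.
Proof.
apply/colP => r; rewrite !mxE.
under eq_bigr do rewrite !mxE.
rewrite -(big_enum_val (fun i => X r i * th i 0)) big_mkcond /=.
by apply: eq_bigr => i _; rewrite !mxE; case: ifP; rewrite ?mulr0.
Qed.

Lemma mask_mask th S T : mask (mask th S) T = mask th (S :&: T).
Proof. by apply/colP => i; rewrite !mxE inE; case: (i \in S); case: (i \in T). Qed.

Lemma sqnormr_thsub th S : sqnormr (thsub th S)^T = \sum_(i in S) th i 0 ^+ 2.
Proof.
rewrite sqnormrE (big_enum_val (fun i => th i 0 ^+ 2)).
by apply: eq_bigr => k _; rewrite !mxE.
Qed.

Lemma sum_sqr_mask th S T : S \subset T ->
  \sum_(i in T) mask th S i 0 ^+ 2 = \sum_(i in S) th i 0 ^+ 2.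
Proof.
move=> ST; under eq_bigr do rewrite mxE (fun_if (fun x => x ^+ 2)) expr0n.
by rewrite -big_mkcondr; apply: eq_bigl => i; rewrite andb_idl // => /(fintype.subsetP ST).
Qed.

Lemma sqnorm_trmx m (v : 'cV[R]_m) : sqnorm v = sqnormr v^T.
Proof. by rewrite sqnormrE; apply: eq_bigr => i _; rewrite mxE. Qed.

Lemma mu_setU X th phi g gt : gt \subset true_support th ->
  mu X th phi (g :|: gt) g = phi^-1 *
    sqnormr ((thsub (mask th (gt :\: g)) (true_support th :\: g))^T
             *m (Xsub X (true_support th :\: g))^T *m (1%:M - proj X g)).
Proof.
move=> gt_sup; rewrite /mu finset.setDUl finset.setDv finset.set0U sqnorm_trmx.
rewrite -residual_trmx -!trmx_mul !Xsub_mul_thsub mask_mask (finset.setIidPl _).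
  by rewrite residual_trmx.
exact: finset.setSD.
Qed.

Lemma sum_block_min_sq_le B (z : 'I_p -> 'I_B) th g gt :
  \sum_(b < B) #|block z gt b :\: block z g b|%:R * min_sq th (block z gt b :\: block z g b)
    <= \sum_(i in gt :\: g) th i 0 ^+ 2.
Proof.
rewrite (partition_big z predT) //=; apply: ler_sum => b _.
set D := block z gt b :\: block z g b.
rewrite (eq_bigl (mem D)); last first.
  by move=> i; rewrite !inE; case: (i \in g); case: (i \in gt); case: (z i == b).
rewrite /min_sq; case: eqP => [->|D_neq0].
  by rewrite mulr0 sumr_ge0 // => i _; apply: sqr_ge0.
rewrite mulrC mulr_natr -sumr_const; apply: ler_sum => i iD.
by apply: ge_inf; [exists 0 => _ [j _ <-]; apply: sqr_ge0 | exists i].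
Qed.

End Regression.

Theorem lemma2 (R : realType) (n p B : nat) (X : 'M[R]_(n, p)) (th : 'cV[R]_p)
    (phi : R) (z : 'I_p -> 'I_B) (g gt : {set 'I_p}) :
  0 < phi ->
  full_col_rank X g ->
  gt \subset true_support th ->
  ~~ (gt \subset g) ->
  mu X th phi (g :|: gt) g >=
    n%:R * phi^-1 * rho X th *
      \sum_(b < B) #|block z gt b :\: block z g b|%:R *
                   min_sq th (block z gt b :\: block z g b).
Proof.
move=> phi_gt0 g_full gt_sup gt_not_sub.
set u := thsub (mask th (gt :\: g)) (true_support th :\: g).
set S := \sum_(b < B) _.
have S_le : S <= sqnormr u^T.
  by rewrite sqnormr_thsub sum_sqr_mask ?sum_block_min_sq_le ?finset.setSD.
have rho_le : rho X th <= lambda_min (rho_mx X (true_support th) g).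
  apply: rho_le_lambda_min => //.
  by apply: contraNN gt_not_sub; apply: fintype.subset_trans.
rewrite mu_setU // [n%:R * _]mulrC -!mulrA ler_pM2l ?invr_gt0 //.
apply: le_trans _ (natr_mul_qform_rho_mx _ g_full); apply: ler_wpM2l => //.
apply: le_trans _ (lambda_min_le_rayleigh _ (rho_mx_trmx _ _ _) (rho_mx_psd g_full)).
apply: le_trans (ler_wpM2l (rho_ge0 X th) S_le) _.
exact: ler_wpM2r (sqnormr_ge0 _) _ _ rho_le.
Qed.
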